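(* Let three circular arcs meet at a point $X$, forming angles of $2\pi/3$ with each other there, let $C_1,C_2,C_3$ be their centers of curvature and $r_i=|XC_i|$ their radii. Then the following are equivalent: (1) the sum of the three signed curvatures of the arcs at $X$ is zero; (2) the three points $C_1,C_2,C_3$ are collinear; (3) the three circles with centers $C_i$ and radii $r_i$ have two triple crossing points (two distinct points lying on all three circles).
   Context: Signed curvature: for a circular arc of curvature $c\ge 0$ ending at a point $X$, its signed curvature at $X$ is $c$ if the arc curves clockwise as it leaves $X$ and $-c$ if it curves counterclockwise. *)

From Stdlib Require Import Reals.
Open Scope R_scope.

Definition pt := (R * R)%type.

Definition vsub (P Q : pt) : pt := (fst P - fst Q, snd P - snd Q).
Definition dot (u v : pt) : R := fst u * fst v + snd u * snd v.
(* cross u v > 0 iff v points to the left of (counterclockwise from) u *)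
Definition cross (u v : pt) : R := fst u * snd v - snd u * fst v.
Definition pdist (P Q : pt) : R := sqrt (dot (vsub P Q) (vsub P Q)).
Definition unit_vec (u : pt) : Prop := dot u u = 1.

(* A circular arc ending at X is described by its center of curvature C
   (C <> X, radius |XC|) and its unit tangent direction u at X, pointing
   along the arc as it leaves X (so u is orthogonal to the radius XC). *)
Definition arc_at (X C u : pt) : Prop :=
  C <> X /\ unit_vec u /\ dot u (vsub C X) = 0.

(* Signed curvature at X: curvature 1/|XC|, positive iff the arc curves
   clockwise as it leaves X in direction u, i.e. iff the center lies to the
   right of u. *)
Definition signed_curvature (X C u : pt) : R :=
  if Rlt_dec (cross u (vsub C X)) 0 then / pdist X C else - / pdist X C.

Definition collinear (A B C : pt) : Prop := cross (vsub B A) (vsub C A) = 0.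

Definition on_circle (C : pt) (r : R) (P : pt) : Prop := pdist P C = r.

From Stdlib Require Import Reals Lra.
Open Scope R_scope.

(* Write each center as [C_i = X + k_i J u_i], with [J] the rotation by a
   right angle, so that the signed curvature is [-1/k_i].  The equiangular
   tangents satisfy [u_1 + u_2 + u_3 = 0] and [cross u_1 u_2 <> 0], and the
   collinearity determinant of the centers is
   [cross u_1 u_2 * (k_1 k_2 + k_2 k_3 + k_3 k_1)], a nonzero multiple of
   [k_1 k_2 k_3] times the curvature sum.  All three circles pass through [X];
   if the centers lie on a line [L] (which avoids [X]), the mirror image of
   [X] in [L] is a second common point, and conversely two common points
   force all centers onto their perpendicular bisector. *)

Definition vadd (u v : pt) : pt := (fst u + fst v, snd u + snd v).
Definition vscale (k : R) (u : pt) : pt := (k * fst u, k * snd u).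
Definition rot90 (u : pt) : pt := (- snd u, fst u).

Lemma cos_2PI_div_3 : cos (2 * PI / 3) = -1/2.
Proof. replace (2 * PI / 3) with (2 * (PI / 3)) by field. apply cos_2PI3. Qed.

Lemma dot_cross_sq (u v : pt) :
  dot u v * dot u v + cross u v * cross u v = dot u u * dot v v.
Proof. destruct u, v; unfold dot, cross; simpl; ring. Qed.

Lemma dot_vsub_sym (P Q : pt) : dot (vsub P Q) (vsub P Q) = dot (vsub Q P) (vsub Q P).
Proof. destruct P, Q; unfold dot, vsub; simpl; ring. Qed.

Lemma pdist_eq_sq (P Q C : pt) :
  pdist P C = pdist Q C -> dot (vsub P C) (vsub P C) = dot (vsub Q C) (vsub Q C).
Proof.
  assert (Hpos : forall v, 0 <= dot v v)
    by (intros [a b]; unfold dot; simpl; nra).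
  apply sqrt_inj; apply Hpos.
Qed.

Section Arc.

Variables (X C u : pt).
Hypothesis Harc : arc_at X C u.

Let k := cross u (vsub C X).

Lemma arc_at_offset : vsub C X = vscale k (rot90 u).
Proof.
  destruct Harc as [_ [Hu Ho]]; unfold k.
  destruct X as [x y], C as [c d], u as [a b].
  unfold unit_vec, dot, cross, vscale, rot90, vsub in *; simpl in *.
  (* [w = dot u w * u + cross u w * J u] for a unit vector [u] *)
  f_equal.
  - transitivity ((c - x) * (a*a + b*b) - a * (a*(c-x) + b*(d-y))); [rewrite Hu, Ho|]; ring.
  - transitivity ((d - y) * (a*a + b*b) - b * (a*(c-x) + b*(d-y))); [rewrite Hu, Ho|]; ring.
Qed.

Lemma arc_at_cross_neq0 : k <> 0.
Proof.
  intro Hk. destruct Harc as [HCX _]. apply HCX.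
  pose proof arc_at_offset as E. rewrite Hk in E.
  destruct X as [x y], C as [c d].
  unfold vscale, vsub in E; simpl in E. injection E as E1 E2.
  f_equal; lra.
Qed.

Lemma pdist_arc_at : pdist X C = Rabs k.
Proof.
  destruct Harc as [_ [Hu Ho]].
  pose proof (dot_cross_sq u (vsub C X)) as L.
  rewrite Ho, Hu in L.
  unfold pdist. rewrite dot_vsub_sym, <- sqrt_Rsqr_abs.
  unfold Rsqr, k. f_equal. lra.
Qed.

Lemma signed_curvature_arc_at : signed_curvature X C u = - / k.
Proof.
  unfold signed_curvature. fold k. rewrite pdist_arc_at.
  destruct (Rlt_dec k 0) as [Hl|Hl].
  - rewrite Rabs_left by exact Hl. apply Rinv_opp.
  - rewrite Rabs_right by lra. reflexivity.
Qed.

End Arc.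

Lemma equiangular_units_sum (u1 u2 u3 : pt) :
  unit_vec u1 -> unit_vec u2 -> unit_vec u3 ->
  dot u1 u2 = -1/2 -> dot u2 u3 = -1/2 -> dot u3 u1 = -1/2 ->
  vadd (vadd u1 u2) u3 = (0, 0).
Proof.
  destruct u1 as [a1 b1], u2 as [a2 b2], u3 as [a3 b3].
  unfold unit_vec, dot, vadd; simpl; intros H1 H2 H3 H12 H23 H31.
  assert (S : (a1+a2+a3)*(a1+a2+a3) + (b1+b2+b3)*(b1+b2+b3) = 0).
  { transitivity ((a1*a1+b1*b1) + (a2*a2+b2*b2) + (a3*a3+b3*b3)
      + 2*(a1*a2+b1*b2) + 2*(a2*a3+b2*b3) + 2*(a3*a1+b3*b1)); [ring|].
    rewrite H1, H2, H3, H12, H23, H31. field. }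
  pose proof (Rle_0_sqr (a1+a2+a3)). pose proof (Rle_0_sqr (b1+b2+b3)).
  unfold Rsqr in *.
  assert (Sa : (a1+a2+a3)*(a1+a2+a3) = 0) by lra.
  assert (Sb : (b1+b2+b3)*(b1+b2+b3) = 0) by lra.
  apply Rmult_integral in Sa, Sb.
  f_equal; lra.
Qed.

Lemma equiangular_units_cross (u1 u2 : pt) :
  unit_vec u1 -> unit_vec u2 -> dot u1 u2 = -1/2 -> cross u1 u2 <> 0.
Proof.
  intros H1 H2 H12 H0.
  pose proof (dot_cross_sq u1 u2) as L.
  unfold unit_vec in *. rewrite H1, H2, H12, H0 in L. lra.
Qed.

Section Centers.

Variables (X C1 C2 C3 u1 u2 u3 : pt) (k1 k2 k3 : R).
Hypothesis HC1 : vsub C1 X = vscale k1 (rot90 u1).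
Hypothesis HC2 : vsub C2 X = vscale k2 (rot90 u2).

Lemma cross_centers_point :
  cross (vsub C2 C1) (vsub X C1) = k1 * k2 * cross u1 u2.
Proof.
  destruct X as [x y], C1 as [c1 d1], C2 as [c2 d2], u1 as [a1 b1], u2 as [a2 b2].
  unfold vsub, vscale, rot90, cross in *; simpl in *.
  injection HC1 as E1 F1. injection HC2 as E2 F2.
  replace c1 with (x + k1 * - b1) by lra. replace d1 with (y + k1 * a1) by lra.
  replace c2 with (x + k2 * - b2) by lra. replace d2 with (y + k2 * a2) by lra.
  ring.
Qed.

Hypothesis HC3 : vsub C3 X = vscale k3 (rot90 u3).
Hypothesis Hsum : vadd (vadd u1 u2) u3 = (0, 0).

Lemma cross_centers :
  cross (vsub C2 C1) (vsub C3 C1) = cross u1 u2 * (k1 * k2 + k2 * k3 + k3 * k1).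
Proof.
  destruct X as [x y], C1 as [c1 d1], C2 as [c2 d2], C3 as [c3 d3],
    u1 as [a1 b1], u2 as [a2 b2], u3 as [a3 b3].
  unfold vsub, vscale, rot90, vadd, cross in *; simpl in *.
  injection HC1 as E1 F1. injection HC2 as E2 F2. injection HC3 as E3 F3.
  injection Hsum as Ha Hb.
  replace c1 with (x + k1 * - b1) by lra. replace d1 with (y + k1 * a1) by lra.
  replace c2 with (x + k2 * - b2) by lra. replace d2 with (y + k2 * a2) by lra.
  replace c3 with (x + k3 * - b3) by lra. replace d3 with (y + k3 * a3) by lra.
  replace a3 with (- a1 - a2) by lra. replace b3 with (- b1 - b2) by lra.
  ring.
Qed.

End Centers.

Lemma opp_inv_sum_eq0 (k1 k2 k3 : R) : k1 <> 0 -> k2 <> 0 -> k3 <> 0 ->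
  - / k1 + - / k2 + - / k3 = 0 <-> k1 * k2 + k2 * k3 + k3 * k1 = 0.
Proof.
  intros K1 K2 K3.
  assert (E : (- / k1 + - / k2 + - / k3) * (k1 * k2 * k3) = - (k1 * k2 + k2 * k3 + k3 * k1))
    by (field; auto).
  assert (K : k1 * k2 * k3 <> 0)
    by (repeat apply Rmult_integral_contrapositive_currified; assumption).
  split; intro H.
  - rewrite H in E. lra.
  - rewrite H in E. apply (Rmult_eq_reg_r (k1 * k2 * k3)); lra.
Qed.

Lemma collinear_self_l (A B : pt) : collinear A B A.
Proof. destruct A, B; unfold collinear, cross, vsub; simpl; ring. Qed.

Lemma collinear_self_r (A B : pt) : collinear A B B.
Proof. destruct A, B; unfold collinear, cross, vsub; simpl; ring. Qed.

Lemma collinear_of_equidistant (P Q C1 C2 C3 : pt) : P <> Q ->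
  pdist P C1 = pdist Q C1 -> pdist P C2 = pdist Q C2 -> pdist P C3 = pdist Q C3 ->
  collinear C1 C2 C3.
Proof.
  intros HPQ H1 H2 H3.
  apply pdist_eq_sq in H1, H2, H3.
  destruct P as [p1 p2], Q as [q1 q2], C1 as [c1 d1], C2 as [c2 d2], C3 as [c3 d3].
  unfold collinear, cross, dot, vsub in *; simpl in *.
  (* both [C2 - C1] and [C3 - C1] are orthogonal to [Q - P] *)
  assert (h2 : (q1-p1)*(c2-c1) + (q2-p2)*(d2-d1) = 0) by lra.
  assert (h3 : (q1-p1)*(c3-c1) + (q2-p2)*(d3-d1) = 0) by lra.
  set (K := (c2-c1)*(d3-d1) - (d2-d1)*(c3-c1)).
  assert (Ex : (q1-p1) * K = 0).
  { transitivity (((q1-p1)*(c2-c1) + (q2-p2)*(d2-d1)) * (d3-d1)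
      - ((q1-p1)*(c3-c1) + (q2-p2)*(d3-d1)) * (d2-d1)); [unfold K; ring|].
    rewrite h2, h3. ring. }
  assert (Ey : (q2-p2) * K = 0).
  { transitivity (((q1-p1)*(c3-c1) + (q2-p2)*(d3-d1)) * (c2-c1)
      - ((q1-p1)*(c2-c1) + (q2-p2)*(d2-d1)) * (c3-c1)); [unfold K; ring|].
    rewrite h2, h3. ring. }
  destruct (Req_dec p1 q1) as [e1|e1]; [destruct (Req_dec p2 q2) as [e2|e2]|].
  - subst. contradiction.
  - apply Rmult_integral in Ey. lra.
  - apply Rmult_integral in Ex. lra.
Qed.

Lemma exists_mirror_point (A B X : pt) : ~ collinear A B X ->
  exists P, P <> X /\ forall C, collinear A B C -> pdist P C = pdist X C.
Proof.
  unfold collinear. intros HX.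
  set (w := vsub B A). set (n := dot w w).
  assert (Hn : n <> 0).
  { intro H0. apply HX. fold w.
    pose proof (dot_cross_sq w (vsub X A)) as L. fold n in L. rewrite H0 in L. nra. }
  set (t := - 2 * cross w (vsub X A) / n).
  assert (Htn : t * n = - 2 * cross w (vsub X A)) by (unfold t; field; exact Hn).
  assert (Ht : t <> 0).
  { intro H0. apply HX. fold w. rewrite H0 in Htn. lra. }
  exists (vadd X (vscale t (rot90 w))). split.
  - intro E. apply Hn. unfold n.
    destruct X as [x y], w as [wx wy].
    unfold vadd, vscale, rot90, dot in *; simpl in *. injection E as E1 E2.
    assert (wx = 0) by (apply (Rmult_eq_reg_l t); lra).
    assert (wy = 0) by (apply (Rmult_eq_reg_l t); lra).
    subst; ring.
  - intros C HC. unfold pdist. f_equal. fold w in HC.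
    transitivity (dot (vsub X C) (vsub X C)
      + t * (t * n + 2 * cross w (vsub X A)) - 2 * t * cross w (vsub C A)).
    + unfold n. destruct A, X, C, w. unfold vadd, vscale, rot90, dot, cross, vsub; simpl.
      ring.
    + rewrite Htn, HC. ring.
Qed.

Theorem lemma2 (X C1 C2 C3 u1 u2 u3 : pt) :
  arc_at X C1 u1 -> arc_at X C2 u2 -> arc_at X C3 u3 ->
  dot u1 u2 = cos (2 * PI / 3) ->
  dot u2 u3 = cos (2 * PI / 3) ->
  dot u3 u1 = cos (2 * PI / 3) ->
  let r1 := pdist X C1 in let r2 := pdist X C2 in let r3 := pdist X C3 in
  (signed_curvature X C1 u1 + signed_curvature X C2 u2
     + signed_curvature X C3 u3 = 0 <-> collinear C1 C2 C3) /\
  (collinear C1 C2 C3 <->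
     exists P Q : pt, P <> Q /\
       on_circle C1 r1 P /\ on_circle C2 r2 P /\ on_circle C3 r3 P /\
       on_circle C1 r1 Q /\ on_circle C2 r2 Q /\ on_circle C3 r3 Q).
Proof.
  intros A1 A2 A3 D12 D23 D31 r1 r2 r3.
  rewrite cos_2PI_div_3 in D12, D23, D31.
  pose proof A1 as [_ [U1 _]]. pose proof A2 as [_ [U2 _]]. pose proof A3 as [_ [U3 _]].
  pose proof (equiangular_units_cross _ _ U1 U2 D12) as Hs.
  pose proof (arc_at_offset _ _ _ A1) as O1.
  pose proof (arc_at_offset _ _ _ A2) as O2.
  pose proof (arc_at_offset _ _ _ A3) as O3.
  pose proof (arc_at_cross_neq0 _ _ _ A1) as K1.
  pose proof (arc_at_cross_neq0 _ _ _ A2) as K2.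
  pose proof (arc_at_cross_neq0 _ _ _ A3) as K3.
  rewrite !signed_curvature_arc_at by assumption.
  set (k1 := cross u1 (vsub C1 X)) in *.
  set (k2 := cross u2 (vsub C2 X)) in *.
  set (k3 := cross u3 (vsub C3 X)) in *.
  assert (Hcol : collinear C1 C2 C3 <-> k1 * k2 + k2 * k3 + k3 * k1 = 0).
  { unfold collinear.
    rewrite (cross_centers X C1 C2 C3 u1 u2 u3 k1 k2 k3 O1 O2 O3
      (equiangular_units_sum _ _ _ U1 U2 U3 D12 D23 D31)).
    split; intro H; [apply Rmult_integral in H as [H|H]; [contradiction|exact H]|].
    rewrite H. ring. }
  split; [rewrite Hcol; exact (opp_inv_sum_eq0 _ _ _ K1 K2 K3)|].
  split.
  - intros Hcoll.
    destruct (exists_mirror_point C1 C2 X) as [P [HPX HP]].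
    { unfold collinear. rewrite (cross_centers_point X C1 C2 u1 u2 k1 k2 O1 O2).
      repeat apply Rmult_integral_contrapositive_currified; assumption. }
    exists P, X. unfold on_circle, r1, r2, r3.
    repeat split; auto using collinear_self_l, collinear_self_r.
  - intros [P [Q [HPQ [P1 [P2 [P3 [Q1 [Q2 Q3]]]]]]]].
    unfold on_circle in *.
    apply (collinear_of_equidistant P Q); congruence.
Qed.
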